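(* Let $A\subseteq B$ be commutative semirings, $S=A[x_1,\dots,x_n]$, $\rho$ a congruence on $B$, and $\sigma$ a congruence on $S$. Then $(\sqrt{\sigma/\rho})^{c}\subseteq(\sqrt{\rho})_B(Z_\rho(\sigma)(B))$.
   Context: Semirings are commutative with $0$ and $1\neq0$, $0a=0$; congruences are equivalence relations compatible with $+$ and $\cdot$. Twisted product: $(a,b)\ast(c,d)=(ac+bd,ad+bc)$, with $(a,b)^{\ast1}=(a,b)$ and $(a,b)^{\ast n}=(a,b)^{\ast(n-1)}\ast(a,b)$. For a congruence $\theta$ on a semiring $R$, $\sqrt{\theta}=\{(a,b)\in R\times R:\ (a+c,b+c)^{\ast n}\in\theta\ \text{for some}\ c\in R,\ n\geq1\}$. For $Y\subseteq B^n$ and a congruence $\theta$ on $B$, $\theta_B(Y)=\{(f,g)\in S\times S: (f(P),g(P))\in\theta\ \forall P\in Y\}$; $Z_\rho(\sigma)(B)=\{P\in B^n:(f(P),g(P))\in\rho\ \forall(f,g)\in\sigma\}$. For $f=\sum a_{i_1\cdots i_n}x_1^{i_1}\cdots x_n^{i_n}$, $g=\sum b_{i_1\cdots i_n}x_1^{i_1}\cdots x_n^{i_n}$ in $S$ and a congruence $\theta$ on $B$, write $f\equiv g\pmod\theta$ if $(a_{i_1\cdots i_n},b_{i_1\cdots i_n})\in\theta$ for all multi-indices. Define $\sqrt{\sigma/\rho}=\{(f_1,f_2)\in S\times S:\ \exists (g_1,g_2)\in\sqrt{\sigma}$ with $f_i\equiv g_i \pmod{\sqrt\rho}$, $i=1,2\}$,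 and $(\sqrt{\sigma/\rho})^{c}$ is the congruence on $S$ generated by this relation. *)

(* commutative semirings = comNzSemiRingType; polynomials over
   a semiring are finitely supported coefficient functions (finmap fsfun). *)
From HB Require Import structures.
From mathcomp Require Import all_boot all_order all_algebra.
From mathcomp Require Import finmap.
Set Implicit Arguments. Unset Strict Implicit. Unset Printing Implicit Defensive.
Import Order.TTheory GRing.Theory.
Local Open Scope fset_scope.
Local Open Scope ring_scope.

Section Generic.
Variables (T : Type) (add mul : T -> T -> T).

Definition is_congr (r : T -> T -> Prop) : Prop :=
  [/\ (forall a, r a a), (forall a b, r a b -> r b a),
      (forall a b c, r a b -> r b c -> r a c),
      (forall a b c d, r a b -> r c d -> r (add a c) (add b d)) &
      (forall a b c d, r a b -> r c d -> r (mul a c) (mul b d))].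

Definition twist (x y : T * T) : T * T :=
  (add (mul x.1 y.1) (mul x.2 y.2), add (mul x.1 y.2) (mul x.2 y.1)).

(* twisted power, meaningful for n >= 1: x^{*1} = x, x^{*n} = x^{*(n-1)} * x *)
Fixpoint twpow (x : T * T) (n : nat) : T * T :=
  match n with
  | 0 | 1 => x
  | k.+1 => twist (twpow x k) x
  end.

Definition crad (theta : T -> T -> Prop) (a b : T) : Prop :=
  exists c n, (1 <= n)%N /\
    let p := twpow (add a c, add b c) n in theta p.1 p.2.

Definition congr_gen (R : T -> T -> Prop) (x y : T) : Prop :=
  forall c, is_congr c -> (forall u v, R u v -> c u v) -> c x y.
End Generic.

Definition mon (n : nat) := {ffun 'I_n -> nat}.
Definition monadd n (m1 m2 : mon n) : mon n := [ffun i => (m1 i + m2 i)%N].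

Definition spoly (A : comNzSemiRingType) (n : nat) := {fsfun mon n -> A with 0}.

Section Poly.
Variables (A : comNzSemiRingType) (n : nat).
Implicit Types p q : spoly A n.

Definition padd p q : spoly A n :=
  [fsfun m in finsupp p `|` finsupp q => p m + q m].

Definition pmul p q : spoly A n :=
  [fsfun m in [fset monadd m1 m2 | m1 in finsupp p, m2 in finsupp q] =>
     \sum_(m1 <- finsupp p) \sum_(m2 <- finsupp q | monadd m1 m2 == m)
        p m1 * q m2].
End Poly.

Section Eval.
Variables (A B : comNzSemiRingType) (iota : {rmorphism A -> B}) (n : nat).

Definition peval (f : spoly A n) (P : 'I_n -> B) : B :=
  \sum_(m <- finsupp f) iota (f m) * \prod_(i < n) P i ^+ m i.

Definition thetaB (theta : B -> B -> Prop) (Y : ('I_n -> B) -> Prop)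
  (f g : spoly A n) : Prop :=
  forall P, Y P -> theta (peval f P) (peval g P).

Definition Zvar (rho : B -> B -> Prop) (sigma : spoly A n -> spoly A n -> Prop)
  (P : 'I_n -> B) : Prop :=
  forall f g, sigma f g -> rho (peval f P) (peval g P).

Definition coef_congr (theta : B -> B -> Prop) (f g : spoly A n) : Prop :=
  forall m : mon n, theta (iota (f m)) (iota (g m)).

Definition rad_quot (sigma : spoly A n -> spoly A n -> Prop)
  (rho : B -> B -> Prop) (f1 f2 : spoly A n) : Prop :=
  exists g1 g2, crad (@padd A n) (@pmul A n) sigma g1 g2 /\
    coef_congr (crad +%R *%R rho) f1 g1 /\ coef_congr (crad +%R *%R rho) f2 g2.
End Eval.

(* Pairs over B with the twisted product form a commutative semiring in which
   a congruence rho becomes the ideal {(a, b) | rho a b}; then sqrt(rho)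
   relates a and b when some power of (a + c, b + c) lies in that ideal, and
   the binomial theorem makes sqrt(rho) a congruence again.  Evaluation at a
   point of B^n is a semiring morphism, hence commutes with twisted powers, so
   it sends sqrt(sigma) into sqrt(rho) at every point of Z_rho(sigma)(B) and
   coefficientwise sqrt(rho)-congruence into sqrt(rho).  Thus
   (sqrt(rho))_B(Z_rho(sigma)(B)) is a congruence containing sqrt(sigma/rho). *)

From HB Require Import structures.
From mathcomp Require Import all_boot all_algebra.
From mathcomp Require Import finmap.
From mathcomp Require Import ring zify.
Set Implicit Arguments. Unset Strict Implicit. Unset Printing Implicit Defensive.
Import GRing.Theory.
Local Open Scope ring_scope.

Lemma is_congr_cap (T I : Type) (add mul : T -> T -> T)
    (Y : I -> Prop) (R : I -> T -> T -> Prop) :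
  (forall i, Y i -> is_congr add mul (R i)) ->
  is_congr add mul (fun a b => forall i, Y i -> R i a b).
Proof.
move=> RC; split.
- by move=> a i /RC [].
- by move=> a b h i Yi; case: (RC i Yi) => _ sym _ _ _; apply/sym/h.
- move=> a b c h1 h2 i Yi; case: (RC i Yi) => _ _ tr _ _.
  exact: tr (h1 i Yi) (h2 i Yi).
- move=> a b c d h1 h2 i Yi; case: (RC i Yi) => _ _ _ D _.
  exact: D (h1 i Yi) (h2 i Yi).
- move=> a b c d h1 h2 i Yi; case: (RC i Yi) => _ _ _ _ M.
  exact: M (h1 i Yi) (h2 i Yi).
Qed.

Lemma is_congr_sum (B : pzSemiRingType) (I : Type) (R : B -> B -> Prop)
    (s : seq I) (F G : I -> B) :
  is_congr +%R *%R R -> (forall i, R (F i) (G i)) ->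
  R (\sum_(i <- s) F i) (\sum_(i <- s) G i).
Proof.
case=> refl _ _ D _ FG; elim: s => [|i s IHs]; first by rewrite !big_nil.
by rewrite !big_cons; apply: D.
Qed.

Section SemiringMorphism.
Variables (T U : Type) (addT mulT : T -> T -> T) (addU mulU : U -> U -> U).
Variable h : T -> U.
Hypothesis hD : forall a b, h (addT a b) = addU (h a) (h b).
Hypothesis hM : forall a b, h (mulT a b) = mulU (h a) (h b).

Definition map_pair (x : T * T) : U * U := (h x.1, h x.2).

Lemma map_pair_twist x y :
  map_pair (twist addT mulT x y) = twist addU mulU (map_pair x) (map_pair y).
Proof. by rewrite /map_pair /twist /= !hD !hM. Qed.

Lemma map_pair_twpow x k :
  map_pair (twpow addT mulT x k) = twpow addU mulU (map_pair x) k.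
Proof.
elim: k => [|[|k] IHk] //.
by rewrite [twpow _ _ x _]/= map_pair_twist IHk.
Qed.

Lemma crad_map (R : T -> T -> Prop) (S : U -> U -> Prop) a b :
  (forall u v, R u v -> S (h u) (h v)) ->
  crad addT mulT R a b -> crad addU mulU S (h a) (h b).
Proof.
move=> RS [c [k [k_gt0 Rk]]]; exists (h c), k; split => //=.
have -> : (addU (h a) (h c), addU (h b) (h c)) = map_pair (addT a c, addT b c).
  by rewrite /map_pair !hD.
by rewrite -map_pair_twpow; apply: RS.
Qed.

Lemma is_congr_preimage (S : U -> U -> Prop) :
  is_congr addU mulU S -> is_congr addT mulT (fun a b => S (h a) (h b)).
Proof.
case=> refl sym tr D M; split.
- by move=> a; apply: refl.
- by move=> a b /sym.
- by move=> a b c /tr; apply.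
- by move=> a b c d h1 h2; rewrite !hD; apply: D.
- by move=> a b c d h1 h2; rewrite !hM; apply: M.
Qed.
End SemiringMorphism.

Section TwistedSemiring.
Variable B : comPzSemiRingType.

(* B * B already carries the componentwise semiring structure, hence the alias. *)
Definition twisted := (B * B)%type.
HB.instance Definition _ := GRing.Nmodule.on twisted.

Lemma twistedDE (x y : twisted) : x + y = (x.1 + y.1, x.2 + y.2).
Proof. by []. Qed.

Let twmul (x y : twisted) : twisted := twist +%R *%R x y.

Let twmulA : associative twmul.
Proof. by case=> a b [c d] [e f]; rewrite /twmul /twist /=; congr pair; ring. Qed.
Let twmulC : commutative twmul.
Proof. by case=> a b [c d]; rewrite /twmul /twist /=; congr pair; ring. Qed.
Let twmul1 : left_id ((1, 0) : twisted) twmul.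
Proof. by case=> a b; rewrite /twmul /twist /=; congr pair; ring. Qed.
Let twmulDl : left_distributive twmul +%R.
Proof.
by case=> a b [c d] [e f]; rewrite /twmul !twistedDE /twist /=; congr pair; ring.
Qed.
Let twmul0 : left_zero (0 : twisted) twmul.
Proof. by case=> a b; rewrite /twmul /twist /=; congr pair; ring. Qed.

HB.instance Definition _ := GRing.Nmodule_isComPzSemiRing.Build twisted
  twmulA twmulC twmul1 twmulDl twmul0.

Lemma twistedE (x y : twisted) : x * y = twist +%R *%R x y.
Proof. by []. Qed.

Lemma twpow_exprS (x : twisted) k : twpow +%R *%R x k.+1 = x ^+ k.+1.
Proof. by elim: k => [|k IHk]; rewrite ?expr1 // exprSr -IHk. Qed.

Lemma twisted_swap (a b : B) : ((b, a) : twisted) = ((a, b) : twisted) * (0, 1).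
Proof. by rewrite twistedE /twist /=; congr pair; ring. Qed.
End TwistedSemiring.

Section Radical.
Variables (B : comPzSemiRingType) (rho : B -> B -> Prop).
Hypothesis rhoC : is_congr +%R *%R rho.

Definition related (x : twisted B) := rho x.1 x.2.

Lemma related0 : related 0.
Proof. by case: rhoC => refl _ _ _ _; apply: refl. Qed.

Lemma relatedD x y : related x -> related y -> related (x + y).
Proof. by case: rhoC => _ _ _ D _; apply: D. Qed.

Lemma relatedMr x y : related x -> related (x * y).
Proof.
case: rhoC => refl sym tr D M; case: x y => [a1 a2] [b1 b2] /= rho_a.
rewrite /related twistedE /=; apply: (tr _ (a2 * b1 + a1 * b2)).
  exact: D (M _ _ _ _ rho_a (refl b1)) (M _ _ _ _ (sym _ _ rho_a) (refl b2)).
by rewrite addrC; apply: refl.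
Qed.

(* Each term of the binomial expansion of (x + y)^(m + k + 1) contains x^(m+1)
   or y^(k+1) as a factor. *)
Lemma related_exprD x y m k :
  related (x ^+ m.+1) -> related (y ^+ k.+1) -> related ((x + y) ^+ (m + k).+1).
Proof.
move=> rx ry; rewrite exprDn; apply: (big_ind related related0 relatedD) => i _.
rewrite -mulr_natr; apply: relatedMr.
have [k_lt_i | i_le_k] := leqP k.+1 i.
  have -> : y ^+ i = y ^+ k.+1 * y ^+ (i - k.+1) by rewrite -exprD subnKC.
  by rewrite mulrCA; apply: relatedMr.
have -> : ((m + k).+1 - i = m.+1 + (k - i))%N by lia.
by rewrite exprD -mulrA; apply: relatedMr.
Qed.

Lemma cradP a b :
  crad +%R *%R rho a b <-> exists c k, related (((a + c, b + c) : twisted B) ^+ k.+1).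
Proof.
split; first by case=> c [[|k] [//]]; exists c, k; rewrite -twpow_exprS.
by case=> c [k rk]; exists c, k.+1; rewrite twpow_exprS.
Qed.

Lemma crad_refl a : crad +%R *%R rho a a.
Proof.
by apply/cradP; exists 0, 0; rewrite expr1; case: rhoC => refl _ _ _ _; apply: refl.
Qed.

Lemma crad_sym a b : crad +%R *%R rho a b -> crad +%R *%R rho b a.
Proof.
by case/cradP=> c [k rk]; apply/cradP; exists c, k;
  rewrite twisted_swap exprMn; apply: relatedMr.
Qed.

Lemma crad_add a b c d :
  crad +%R *%R rho a b -> crad +%R *%R rho c d -> crad +%R *%R rho (a + c) (b + d).
Proof.
case/cradP=> e [k rk] /cradP [f [l rl]]; apply/cradP; exists (e + f), (k + l).
have := related_exprD rk rl; rewrite twistedDE /=.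
by congr (related (_ ^+ _)); congr pair; ring.
Qed.

Lemma crad_addr_cancel a b e :
  crad +%R *%R rho (a + e) (b + e) -> crad +%R *%R rho a b.
Proof. by case/cradP=> c [k rk]; apply/cradP; exists (e + c), k; rewrite !addrA. Qed.

Lemma crad_trans a b c :
  crad +%R *%R rho a b -> crad +%R *%R rho b c -> crad +%R *%R rho a c.
Proof.
by move=> rab rbc; apply: (@crad_addr_cancel _ _ b); rewrite (addrC c);
  apply: crad_add.
Qed.

Lemma crad_mulr a b e : crad +%R *%R rho a b -> crad +%R *%R rho (a * e) (b * e).
Proof.
case/cradP=> c [k rk]; apply/cradP; exists (c * e), k.
have -> : ((a * e + c * e, b * e + c * e) : twisted B) =
          ((a + c, b + c) : twisted B) * (e, 0).
  by rewrite twistedE /twist /=; congr pair; ring.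
by rewrite exprMn; apply: relatedMr.
Qed.

Lemma crad_is_congr : is_congr +%R *%R (crad +%R *%R rho).
Proof.
split; [exact: crad_refl | exact: crad_sym | exact: crad_trans | exact: crad_add |].
move=> a b c d rab rcd; apply: (crad_trans (crad_mulr c rab)).
by rewrite !(mulrC b); apply: crad_mulr.
Qed.
End Radical.

Section Evaluation.
Local Open Scope fset_scope.
Local Open Scope ring_scope.
Variables (A B : comNzSemiRingType) (iota : {rmorphism A -> B}) (n : nat).
Implicit Types (p q f g : spoly A n) (P : 'I_n -> B).

Lemma peval_fsubset p P (s : {fset mon n}) : finsupp p `<=` s ->
  peval iota p P = \sum_(m <- s) iota (p m) * \prod_(i < n) P i ^+ m i.
Proof.
move=> ps; apply: big_fset_incl => // m _.
by rewrite memNfinsupp => /eqP ->; rewrite rmorph0 mul0r.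
Qed.

Lemma paddE p q m : padd p q m = p m + q m.
Proof.
rewrite /padd fsfunE; case: ifP => // /negbT.
by rewrite inE negb_or !memNfinsupp => /andP [/eqP -> /eqP ->]; rewrite addr0.
Qed.

Lemma peval_padd p q P : peval iota (padd p q) P = peval iota p P + peval iota q P.
Proof.
rewrite !(@peval_fsubset _ P (finsupp p `|` finsupp q)) ?fsubsetUl ?fsubsetUr //.
  by rewrite -big_split; apply: eq_bigr => m _; rewrite paddE rmorphD mulrDl.
apply/fsubsetP => m; rewrite mem_finsupp paddE inE !mem_finsupp.
by apply: contraR; rewrite negb_or !negbK => /andP [/eqP -> /eqP ->]; rewrite addr0.
Qed.

Let supp_pmul p q := [fset monadd m1 m2 | m1 in finsupp p, m2 in finsupp q].

Lemma pmulE p q m : pmul p q m =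
  \sum_(m1 <- finsupp p) \sum_(m2 <- finsupp q | monadd m1 m2 == m) p m1 * q m2.
Proof.
rewrite /pmul fsfunE; case: ifP => // /negP m_out.
rewrite big1_seq // => m1 /andP [_ m1p]; rewrite big1_seq // => m2 /andP [/eqP m_eq m2q].
by case: m_out; rewrite -m_eq; apply/imfset2P; exists m1 => //; exists m2.
Qed.

Lemma finsupp_pmul p q : finsupp (pmul p q) `<=` supp_pmul p q.
Proof.
apply/fsubsetP => m; rewrite mem_finsupp; apply: contraR => m_out.
rewrite pmulE big1_seq // => m1 /andP [_ m1p].
rewrite big1_seq // => m2 /andP [/eqP m_eq m2q].
by case/negP: m_out; rewrite -m_eq; apply/imfset2P; exists m1 => //; exists m2.
Qed.

Lemma prod_expr_monadd P (m1 m2 : mon n) :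
  \prod_(i < n) P i ^+ monadd m1 m2 i =
  (\prod_(i < n) P i ^+ m1 i) * \prod_(i < n) P i ^+ m2 i.
Proof. by rewrite -big_split; apply: eq_bigr => i _; rewrite ffunE exprD. Qed.

Lemma peval_pmul p q P : peval iota (pmul p q) P = peval iota p P * peval iota q P.
Proof.
rewrite (peval_fsubset P (finsupp_pmul p q)) /peval mulr_suml.
under eq_bigr => m _ do rewrite pmulE rmorph_sum mulr_suml.
rewrite exchange_big big_seq [RHS]big_seq; apply: eq_bigr => m1 m1p /=.
under eq_bigr => m _ do rewrite rmorph_sum mulr_suml big_mkcond.
rewrite exchange_big mulr_sumr big_seq [RHS]big_seq; apply: eq_bigr => m2 m2q /=.
rewrite -big_mkcond (eq_bigl (pred1 (monadd m1 m2))) => [|m]; last by rewrite /= eq_sym.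
have m12 : monadd m1 m2 \in supp_pmul p q by apply/imfset2P; exists m1 => //; exists m2.
rewrite -big_filter filter_pred1_uniq ?fset_uniq // big_seq1.
by rewrite rmorphM prod_expr_monadd; ring.
Qed.

Lemma peval_coef_congr (R : B -> B -> Prop) f g P :
  is_congr +%R *%R R -> coef_congr iota R f g -> R (peval iota f P) (peval iota g P).
Proof.
move=> RC fg.
rewrite !(@peval_fsubset _ P (finsupp f `|` finsupp g)) ?fsubsetUl ?fsubsetUr //.
by apply: is_congr_sum => // m; case: RC => refl _ _ _ M; apply: M.
Qed.

Lemma thetaB_is_congr (theta : B -> B -> Prop) (Y : ('I_n -> B) -> Prop) :
  is_congr +%R *%R theta -> is_congr (@padd A n) (@pmul A n) (thetaB iota theta Y).
Proof.
move=> thetaC; apply: is_congr_cap => P _.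
by apply: is_congr_preimage thetaC => *; [apply: peval_padd | apply: peval_pmul].
Qed.

Lemma rad_quot_thetaB (rho : B -> B -> Prop) sigma f g :
  is_congr +%R *%R rho -> rad_quot iota sigma rho f g ->
  thetaB iota (crad +%R *%R rho) (Zvar iota rho sigma) f g.
Proof.
move=> rhoC [g1 [g2 [rad_g [fg1 gg2]]]] P ZP.
have radC := crad_is_congr rhoC.
have rad_gP := crad_map (fun p q => peval_padd p q P) (fun p q => peval_pmul p q P)
  ZP rad_g.
case: (radC) => _ sym tr _ _.
apply: tr _ _ _ (peval_coef_congr P radC fg1) (tr _ _ _ rad_gP _).
exact: sym _ _ (peval_coef_congr P radC gg2).
Qed.
End Evaluation.

Theorem proposition3p9 (A B : comNzSemiRingType) (iota : {rmorphism A -> B})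
  (iota_inj : injective iota) (n : nat)
  (rho : B -> B -> Prop) (sigma : spoly A n -> spoly A n -> Prop) :
  is_congr +%R *%R rho ->
  is_congr (@padd A n) (@pmul A n) sigma ->
  forall f g : spoly A n,
    congr_gen (@padd A n) (@pmul A n) (rad_quot iota sigma rho) f g ->
    thetaB iota (crad +%R *%R rho) (Zvar iota rho sigma) f g.
Proof.
move=> rhoC _ f g; apply; first exact/thetaB_is_congr/crad_is_congr.
by move=> u v; apply: rad_quot_thetaB.
Qed.
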